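(* Let $n\in\mathbb{N}$ and consider the equation $q_nx^n+\cdots+q_1x+q_0=0$ in the unknown $x\in\mathbb{H}$, with $q_n\neq 0$. (a) Suppose all $q_i$ are real, and the solution set of the equation in $\mathbb{C}$ is $\{\xi_1,\ldots,\xi_s,\zeta_1,\overline{\zeta_1},\ldots,\zeta_t,\overline{\zeta_t}\}$, where $\xi_1,\ldots,\xi_s$ are distinct real numbers and $\zeta_1,\ldots,\zeta_t$ are distinct nonreal complex numbers. Then the solution set in $\mathbb{H}$ is $\{\xi_1,\ldots,\xi_s\}\cup[\zeta_1]\cup\cdots\cup[\zeta_t]$. (b) More generally, suppose all $q_i$ are complex numbers and the solution set of the equation in $\mathbb{C}$ is $\{\xi_1,\ldots,\xi_s,\eta_1,\ldots,\eta_k,\zeta_1,\overline{\zeta_1},\ldots,\zeta_t,\overline{\zeta_t}\}$, where $\xi_1,\ldots,\xi_s$ are distinct real numbers, $\eta_1,\ldots,\eta_k,\zeta_1,\ldots,\zeta_t$ are distinct nonreal complex numbers, and no $\overline{\eta_i}$ is a root of the equation. Then the solution set in $\mathbb{H}$ is $\{\xi_1,\ldots,\xi_s,\eta_1,\ldots,\eta_k\}\cup[\zeta_1]\cup\cdots\cup[\zeta_t]$. (c) Let $p_1,\ldots,p_n\in\mathbb{H}$ with $p_n\neq0$, $d_0\in\{0,1\}$, and let $f_1,f_2,\bar f_1,\bar f_2$ be the derived polynomials of the equation $p_nx^n+\cdots+p_1x+d_0=0$. Then this equation has only finitely many solutions in $\mathbb{H}$ if and only if the complex polynomial $\gcd(f_1,f_2,\bar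 f_1,\bar f_2)$ has no nonreal complex root, if and only if the complex polynomial $\gcd(f_1,f_2)$ has no pair of nonreal conjugate complex roots (i.e., there is no nonreal $c\in\mathbb{C}$ with $c$ and $\bar c$ both roots of $\gcd(f_1,f_2)$).
   Context: $\mathbb{H}$ denotes the real quaternions with units $\mathbf{i},\mathbf{j},\mathbf{k}$, and $\mathbb{C}=\mathbb{R}\oplus\mathbb{R}\mathbf{i}\subset\mathbb{H}$. For $q\in\mathbb{H}$, $[q]=\{aqa^{-1}:a\in\mathbb{H},a\neq0\}$. Derived polynomials: writing $p_i=t_1^{(i)}+t_2^{(i)}\mathbf{j}$ with $t_1^{(i)},t_2^{(i)}\in\mathbb{C}$, set $f_1(t)=t_1^{(n)}t^n+\cdots+t_1^{(1)}t+d_0$, $f_2(t)=t_2^{(n)}t^n+\cdots+t_2^{(1)}t$, $\bar f_1(t)=\overline{t_1^{(n)}}t^n+\cdots+\overline{t_1^{(1)}}t+d_0$, $\bar f_2(t)=\overline{t_2^{(n)}}t^n+\cdots+\overline{t_2^{(1)}}t$, regarded as polynomials in $\mathbb{C}[t]$. *)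

From HB Require Import structures.
From mathcomp Require Import all_boot all_order all_algebra.
From mathcomp Require Import reals.
From mathcomp Require Import complex.
Set Implicit Arguments. Unset Strict Implicit. Unset Printing Implicit Defensive.
Import Order.TTheory GRing.Theory Num.Theory.
Local Open Scope ring_scope.

(* Quaternion a + b i + c j + d k *)
Record quat (R : Type) : Type := Quat { qa : R; qb : R; qc : R; qd : R }.

Definition seq_of_quat (R : Type) (x : quat R) := [:: qa x; qb x; qc x; qd x].
Definition quat_of_seq (R : Type) (s : seq R) :=
  if s is [:: a; b; c; d] then Some (Quat a b c d) else None.
Lemma seq_of_quatK (R : Type) : pcancel (@seq_of_quat R) (@quat_of_seq R).
Proof. by case. Qed.
HB.instance Definition _ (R : eqType) := Equality.copy (quat R)
  (pcan_type (@seq_of_quatK R)).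
HB.instance Definition _ (R : choiceType) := Choice.copy (quat R)
  (pcan_type (@seq_of_quatK R)).

Section Quat.
Variable R : realType.

Definition qzero : quat R := Quat 0 0 0 0.
Definition qone : quat R := Quat 1 0 0 0.
Definition qadd (x y : quat R) : quat R :=
  Quat (qa x + qa y) (qb x + qb y) (qc x + qc y) (qd x + qd y).
(* Hamilton product, i^2 = j^2 = k^2 = ijk = -1 *)
Definition qmul (x y : quat R) : quat R :=
  Quat (qa x * qa y - qb x * qb y - qc x * qc y - qd x * qd y)
       (qa x * qb y + qb x * qa y + qc x * qd y - qd x * qc y)
       (qa x * qc y - qb x * qd y + qc x * qa y + qd x * qb y)
       (qa x * qd y + qb x * qc y - qc x * qb y + qd x * qa y).
Definition qnorm2 (x : quat R) : R :=
  qa x ^+ 2 + qb x ^+ 2 + qc x ^+ 2 + qd x ^+ 2.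
Definition qinv (x : quat R) : quat R :=
  let n := qnorm2 x in
  Quat (qa x / n) (- qb x / n) (- qc x / n) (- qd x / n).
Definition qpow (x : quat R) (i : nat) : quat R := iter i (qmul x) qone.

Definition qofR (r : R) : quat R := Quat r 0 0 0.
Definition qofC (z : R[i]) : quat R := Quat (complex.Re z) (complex.Im z) 0 0.

(* value of  q_n x^n + ... + q_1 x + q_0  (coefficients on the left) *)
Definition qeval (q : nat -> quat R) (n : nat) (x : quat R) : quat R :=
  foldr qadd qzero [seq qmul (q i) (qpow x i) | i <- iota 0 n.+1].

Definition qclass (q : quat R) : quat R -> Prop :=
  fun x => exists a : quat R, a <> qzero /\ x = qmul (qmul a q) (qinv a).

(* p = t1 + t2 j with t1, t2 in C *)
Definition qt1 (p : quat R) : R[i] := Complex (qa p) (qb p).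
Definition qt2 (p : quat R) : R[i] := Complex (qc p) (qd p).

Definition derf1 (p : nat -> quat R) (n : nat) (d0 : R) : {poly R[i]} :=
  \poly_(i < n.+1) (if i == 0%N then d0%:C%C else qt1 (p i)).
Definition derf2 (p : nat -> quat R) (n : nat) : {poly R[i]} :=
  \poly_(i < n.+1) (if i == 0%N then 0 else qt2 (p i)).
Definition derf1bar (p : nat -> quat R) (n : nat) (d0 : R) : {poly R[i]} :=
  \poly_(i < n.+1) (if i == 0%N then d0%:C%C else conjc (qt1 (p i))).
Definition derf2bar (p : nat -> quat R) (n : nat) : {poly R[i]} :=
  \poly_(i < n.+1) (if i == 0%N then 0 else conjc (qt2 (p i))).

End Quat.

From HB Require Import structures.
From mathcomp Require Import all_boot all_order all_algebra.
From mathcomp Require Import reals.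
From mathcomp Require Import complex.
From mathcomp Require Import ring lra.
Set Implicit Arguments. Unset Strict Implicit. Unset Printing Implicit Defensive.
Import Order.TTheory GRing.Theory Num.Theory.
Local Open Scope ring_scope.
Local Open Scope complex_scope.

(* A quaternion x with real part a and squared norm N satisfies x^2 = 2 a x - N,
   and so does every complex w with Re w = a and |w|^2 = N.  Reducing powers
   modulo X^2 - 2 a X + N, the equation restricted to the sphere
   {Re x = a, |x|^2 = N} (a conjugacy class [w]) becomes an affine equation
   G + D x = 0 with G, D depending only on (a, N); writing G = G1 + G2 j and
   D = D1 + D2 j, the derived polynomials satisfy fk(w) = Gk + Dk w on the
   same sphere, in particular at w and at conj w.
   If D <> 0, the only possible solution on the sphere is x = - D^-1 G.  If
   D = 0, a solution forces G = 0 as well; G = D = 0 happens exactly when f1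
   and f2 both vanish at the two distinct points w and conj w, and then the
   whole class [w] consists of solutions.
   For complex coefficients the j-part of G + D x is D x2 (x = x1 + x2 j),
   which gives (a) and (b).  For (c), every solution x yields a root
   Re x + |Im x| i of f1 f1bar + f2 f2bar, a nonzero polynomial (its top
   coefficient is |p_n|^2), so solutions lie on finitely many spheres. *)

Section Quaternions.
Variable R : realType.
Local Notation H := (quat R).
Local Notation Re := (@complex.Re R).
Local Notation Im := (@complex.Im R).

Lemma quat_ext (x y : H) :
  qa x = qa y -> qb x = qb y -> qc x = qc y -> qd x = qd y -> x = y.
Proof. by case: x y => ???? [????] /= -> -> -> ->. Qed.

Lemma qt12_ext (x y : H) : qt1 x = qt1 y -> qt2 x = qt2 y -> x = y.
Proof. by case: x y => ???? [????] [-> ->] [-> ->]. Qed.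

Lemma qt1_add (x y : H) : qt1 (qadd x y) = qt1 x + qt1 y. Proof. by []. Qed.
Lemma qt2_add (x y : H) : qt2 (qadd x y) = qt2 x + qt2 y. Proof. by []. Qed.

Lemma qt1_mul (x y : H) : qt1 (qmul x y) = qt1 x * qt1 y - qt2 x * conjc (qt2 y).
Proof. by case: x y => ???? [????]; rewrite /qt1 /qt2 /=; simpc; congr (_ +i* _); ring. Qed.

Lemma qt2_mul (x y : H) : qt2 (qmul x y) = qt1 x * qt2 y + qt2 x * conjc (qt1 y).
Proof. by case: x y => ???? [????]; rewrite /qt1 /qt2 /=; simpc; congr (_ +i* _); ring. Qed.

Definition qim2 (x : H) : R := qb x ^+ 2 + qc x ^+ 2 + qd x ^+ 2.

Lemma qnorm2E (x : H) : qnorm2 x = qa x ^+ 2 + qim2 x.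
Proof. by rewrite /qnorm2 /qim2 !addrA. Qed.

Lemma qim2_ge0 (x : H) : 0 <= qim2 x.
Proof. by rewrite /qim2 !addr_ge0 ?sqr_ge0. Qed.

Lemma qim2_eq0 (x : H) : qim2 x = 0 -> x = qofR (qa x).
Proof.
rewrite /qim2 => /eqP; rewrite !paddr_eq0 ?addr_ge0 ?sqr_ge0 // !sqrf_eq0.
by case: x => a b c d /= /andP[/andP[/eqP-> /eqP->] /eqP->].
Qed.

Lemma qnorm2_eq0 (x : H) : qnorm2 x = 0 -> x = qzero R.
Proof.
rewrite qnorm2E => /eqP; rewrite paddr_eq0 ?sqr_ge0 ?qim2_ge0 // sqrf_eq0.
by case/andP => /eqP xa /eqP/qim2_eq0 ->; rewrite xa.
Qed.

Lemma qnorm2_neq0 (x : H) : x <> qzero R -> qnorm2 x != 0.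
Proof. by move=> x0; apply/eqP => /qnorm2_eq0. Qed.

Lemma qnorm2M (x y : H) : qnorm2 (qmul x y) = qnorm2 x * qnorm2 y.
Proof. by rewrite /qnorm2 /=; ring. Qed.

Lemma qnorm2V (h : H) : h <> qzero R -> qnorm2 (qinv h) = (qnorm2 h)^-1.
Proof.
move=> /qnorm2_neq0; case: h => a b c d; rewrite /qinv /qnorm2 /= => hn.
by field.
Qed.

Lemma qmulK (h x : H) : h <> qzero R -> qmul (qmul x h) (qinv h) = x.
Proof.
move=> /qnorm2_neq0; case: h x => a b c d [x1 x2 x3 x4].
by rewrite /qnorm2 /= => hn; apply: quat_ext; rewrite /qinv /qnorm2 /=; field.
Qed.

(* With X the imaginary part of x, the quaternion X + s i conjugates s i to X
   because X^2 = -s^2; when it vanishes, X = -s i and j conjugates s i to X. *)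
Lemma qclass_sphere (a s : R) (x : H) :
  qclass (Quat a s 0 0) x <-> qa x = a /\ qim2 x = s ^+ 2.
Proof.
split.
  case=> h [h0 ->]; have hn := qnorm2_neq0 h0.
  set y := qmul (qmul h _) (qinv h).
  have Ea : qa y = a.
    by move: hn; rewrite /y; case: h {h0 y} => ????; rewrite /qinv /qnorm2 /= => hn; field.
  have Ny : qnorm2 y = a ^+ 2 + s ^+ 2.
    by rewrite !qnorm2M qnorm2V // mulrAC mulfV // mul1r /qnorm2 /=; ring.
  by split => //; apply: (@addrI _ (a ^+ 2)); rewrite -Ny qnorm2E Ea.
case: x => a' b c d [/= -> xs].
have sqr_im : b * b + c * c + d * d = s * s by rewrite -!expr2.
have [h0|hn] := eqVneq (Quat 0 (b + s) c d) (qzero R).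
  case: h0 => bs -> ->.
  have j0 : Quat 0 0 1 0 <> qzero R by case=> /eqP; rewrite oner_eq0.
  exists (Quat 0 0 1 0); split => //; rewrite -[LHS](qmulK _ j0); congr qmul.
  have -> : b = - s by apply/eqP; rewrite -subr_eq0 opprK bs.
  by apply: quat_ext => /=; ring.
exists (Quat 0 (b + s) c d); split; first exact/eqP.
rewrite -[LHS](qmulK _ (elimN eqP hn)).
congr qmul; apply: quat_ext => /=; try ring.
by transitivity (- (b * b + c * c + d * d) - s * b); [ring | rewrite sqr_im; ring].
Qed.

(* [(powrem a N i).1 + (powrem a N i).2 * X] is the remainder of [X ^ i] modulo
   [X ^ 2 - 2 a X + N]. *)
Fixpoint powrem (a N : R) (i : nat) : R * R :=
  if i is i'.+1 then (- (N * (powrem a N i').2), (powrem a N i').1 + 2 * a * (powrem a N i').2)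
  else (1, 0).

Lemma qpow_rem (x : H) i :
  qpow x i =
  Quat ((powrem (qa x) (qnorm2 x) i).1 + (powrem (qa x) (qnorm2 x) i).2 * qa x)
       ((powrem (qa x) (qnorm2 x) i).2 * qb x) ((powrem (qa x) (qnorm2 x) i).2 * qc x)
       ((powrem (qa x) (qnorm2 x) i).2 * qd x).
Proof.
elim: i => [|i IH]; first by apply: quat_ext => /=; ring.
by rewrite [LHS]/= -/(qpow x i) IH; apply: quat_ext; rewrite /= /qnorm2; ring.
Qed.

Definition cnorm2 (w : R[i]) : R := Re w ^+ 2 + Im w ^+ 2.

Lemma cpow_rem (w : R[i]) i :
  w ^+ i = ((powrem (Re w) (cnorm2 w) i).1)%:C + ((powrem (Re w) (cnorm2 w) i).2)%:C * w.
Proof.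
have sqr_w : w * w = (2 * Re w)%:C * w - (cnorm2 w)%:C.
  by case: w => a b; rewrite /cnorm2 /=; simpc; congr (_ +i* _); ring.
elim: i => [|i IH]; first by rewrite expr0 mul0r addr0.
rewrite exprS IH mulrDr mulrCA sqr_w /=; ring.
Qed.

Definition qlin (u : nat -> R) (q : nat -> H) (n : nat) : H :=
  Quat (\sum_(i < n.+1) u i * qa (q i)) (\sum_(i < n.+1) u i * qb (q i))
       (\sum_(i < n.+1) u i * qc (q i)) (\sum_(i < n.+1) u i * qd (q i)).

(* On the sphere [qa x = a, qnorm2 x = N] every [x] satisfies [x^2 = 2 a x - N],
   so [qeval q n] restricts to the affine map [x |-> sph_offset + sph_slope * x]. *)
Definition sph_offset (q : nat -> H) n (a N : R) : H := qlin (fun i => (powrem a N i).1) q n.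
Definition sph_slope (q : nat -> H) n (a N : R) : H := qlin (fun i => (powrem a N i).2) q n.

Lemma qeval_sphere (q : nat -> H) n (x : H) :
  qeval q n x = qadd (sph_offset q n (qa x) (qnorm2 x)) (qmul (sph_slope q n (qa x) (qnorm2 x)) x).
Proof.
have foldr_qadd (s : seq H) : foldr (@qadd R) (qzero R) s =
    Quat (\sum_(y <- s) qa y) (\sum_(y <- s) qb y) (\sum_(y <- s) qc y) (\sum_(y <- s) qd y).
  by elim: s => [|y s IH]; rewrite ?big_nil // /= IH !big_cons.
rewrite /qeval foldr_qadd !big_map.
have -> : iota 0 n.+1 = index_iota 0 n.+1 by rewrite /index_iota subn0.
rewrite !big_mkord.
by apply: quat_ext; rewrite /= !mulr_suml; do ![rewrite -big_split | rewrite -sumrB];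
  apply: eq_bigr => i _; rewrite qpow_rem /=; ring.
Qed.

Lemma sum_complex m (u v : 'I_m -> R) :
  \sum_(i < m) u i +i* v i = (\sum_(i < m) u i) +i* (\sum_(i < m) v i).
Proof. by elim/big_rec3: _ => // i a b c _ ->. Qed.

Lemma qt1_qlin u (q : nat -> H) n : qt1 (qlin u q n) = \sum_(i < n.+1) (u i)%:C * qt1 (q i).
Proof.
by rewrite (eq_bigr (fun i : 'I_n.+1 => (u i * qa (q i)) +i* (u i * qb (q i)))) ?sum_complex //
  => i _; rewrite /qt1; simpc.
Qed.

Lemma qt2_qlin u (q : nat -> H) n : qt2 (qlin u q n) = \sum_(i < n.+1) (u i)%:C * qt2 (q i).
Proof.
by rewrite (eq_bigr (fun i : 'I_n.+1 => (u i * qc (q i)) +i* (u i * qd (q i)))) ?sum_complex //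
  => i _; rewrite /qt2; simpc.
Qed.

Lemma csum_rem (c : nat -> R[i]) n (w : R[i]) :
  \sum_(i < n.+1) c i * w ^+ i =
  \sum_(i < n.+1) ((powrem (Re w) (cnorm2 w) i).1)%:C * c i +
  (\sum_(i < n.+1) ((powrem (Re w) (cnorm2 w) i).2)%:C * c i) * w.
Proof. by rewrite mulr_suml -big_split; apply: eq_bigr => i _; rewrite cpow_rem /=; ring. Qed.

Lemma sum_qt1_sphere (q : nat -> H) n (w : R[i]) :
  \sum_(i < n.+1) qt1 (q i) * w ^+ i =
  qt1 (sph_offset q n (Re w) (cnorm2 w)) + qt1 (sph_slope q n (Re w) (cnorm2 w)) * w.
Proof. by rewrite (csum_rem (fun i => qt1 (q i))) !qt1_qlin. Qed.

Lemma sum_qt2_sphere (q : nat -> H) n (w : R[i]) :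
  \sum_(i < n.+1) qt2 (q i) * w ^+ i =
  qt2 (sph_offset q n (Re w) (cnorm2 w)) + qt2 (sph_slope q n (Re w) (cnorm2 w)) * w.
Proof. by rewrite (csum_rem (fun i => qt2 (q i))) !qt2_qlin. Qed.

Lemma Re_conj (w : R[i]) : Re (conjc w) = Re w. Proof. by case: w. Qed.

Lemma cnorm2_conj (w : R[i]) : cnorm2 (conjc w) = cnorm2 w.
Proof. by case: w => a b; rewrite /cnorm2 /= sqrrN. Qed.

Lemma affine_eq0_conj (g d w : R[i]) :
  Im w != 0 -> g + d * w = 0 -> g + d * conjc w = 0 -> g = 0 /\ d = 0.
Proof.
move=> w0 e1 e2.
have ww : w - conjc w != 0.
  apply: contra w0; case: w {e1 e2} => a b; rewrite /=; simpc.
  by rewrite eq_complex /= => /andP[_ /eqP b0]; apply/eqP; lra.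
have dw : d * (w - conjc w) = 0.
  by transitivity ((g + d * w) - (g + d * conjc w)); [ring | rewrite e1 e2 subrr].
have d0 : d = 0 by move/eqP: dw; rewrite mulf_eq0 (negbTE ww) orbF => /eqP.
by move: e1; rewrite d0 mul0r addr0.
Qed.

Definition dpoly_root (q : nat -> H) n (w : R[i]) : Prop :=
  \sum_(i < n.+1) qt1 (q i) * w ^+ i = 0 /\ \sum_(i < n.+1) qt2 (q i) * w ^+ i = 0.

Lemma sph_eq0_of_dpoly_roots (q : nat -> H) n (w : R[i]) :
  Im w != 0 -> dpoly_root q n w -> dpoly_root q n (conjc w) ->
  sph_offset q n (Re w) (cnorm2 w) = qzero R /\ sph_slope q n (Re w) (cnorm2 w) = qzero R.
Proof.
move=> w0 [r1 r2] [].
rewrite !sum_qt1_sphere !sum_qt2_sphere Re_conj cnorm2_conj in r1 r2 *.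
move=> /(affine_eq0_conj w0 r1) [G1 D1] /(affine_eq0_conj w0 r2) [G2 D2].
by split; apply: qt12_ext.
Qed.

Lemma dpoly_root_of_sph_eq0 (q : nat -> H) n (w : R[i]) :
  sph_offset q n (Re w) (cnorm2 w) = qzero R -> sph_slope q n (Re w) (cnorm2 w) = qzero R ->
  dpoly_root q n w.
Proof. by rewrite /dpoly_root sum_qt1_sphere sum_qt2_sphere => -> ->; rewrite /= mul0r addr0. Qed.

Lemma qeval_eq0_of_sph_eq0 (q : nat -> H) n (a N : R) (x : H) :
  sph_offset q n a N = qzero R -> sph_slope q n a N = qzero R ->
  qa x = a -> qnorm2 x = N -> qeval q n x = qzero R.
Proof. by move=> G0 D0 xa xN; rewrite qeval_sphere xa xN G0 D0; apply: quat_ext => /=; ring. Qed.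

Lemma qt1_qofC (z : R[i]) : qt1 (qofC z) = z. Proof. by case: z. Qed.
Lemma qt2_qofC (z : R[i]) : qt2 (qofC z) = 0. Proof. by []. Qed.

Lemma qofC_qt1 (x : H) : qt2 x = 0 -> x = qofC (qt1 x).
Proof. by case: x => a b c d [-> ->]. Qed.

Lemma qnorm2_qofC (z : R[i]) : qnorm2 (qofC z) = cnorm2 z.
Proof. by rewrite /qnorm2 /cnorm2 /=; ring. Qed.

Lemma qclass_qofC (z : R[i]) (x : H) : qclass (qofC z) x <-> qa x = Re z /\ qim2 x = Im z ^+ 2.
Proof. exact: qclass_sphere. Qed.

Definition sph_point (x : H) : R[i] := qa x +i* Num.sqrt (qim2 x).

Lemma sqr_Im_sph_point (x : H) : Im (sph_point x) ^+ 2 = qim2 x.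
Proof. by rewrite sqr_sqrtr ?qim2_ge0. Qed.

Lemma cnorm2_sph_point (x : H) : cnorm2 (sph_point x) = qnorm2 x.
Proof. by rewrite /cnorm2 sqr_Im_sph_point qnorm2E. Qed.

Lemma qclass_sph_point (x : H) : qclass (qofC (sph_point x)) x.
Proof. by apply/qclass_qofC; rewrite sqr_Im_sph_point. Qed.

Lemma qclass_conj (z : R[i]) (x : H) : qclass (qofC (conjc z)) x <-> qclass (qofC z) x.
Proof. by rewrite !qclass_qofC Re_conj; case: z => a b /=; rewrite sqrrN. Qed.

Lemma Im_sph_point_eq0 (x : H) : Im (sph_point x) = 0 -> x = qofR (qa x).
Proof. by move=> /eqP; rewrite sqrtr_eq0 => im0; apply: qim2_eq0; apply/eqP; rewrite eq_le im0 qim2_ge0. Qed.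

Section ComplexCoefficients.
Variables (c : nat -> R[i]) (n : nat).
Local Notation q := (fun i => qofC (c i)).
Local Notation P w := (\sum_(i < n.+1) c i * w ^+ i).

Lemma dpoly_root_qofC (w : R[i]) : dpoly_root q n w <-> P w = 0.
Proof.
have S2 : \sum_(i < n.+1) qt2 (qofC (c i)) * w ^+ i = 0.
  by rewrite big1 // => i _; rewrite qt2_qofC mul0r.
rewrite /dpoly_root S2 (eq_bigr (fun i : 'I_n.+1 => c i * w ^+ i)) => [|i _].
  by split=> [[]|].
by rewrite qt1_qofC.
Qed.

Lemma qt2_qlin_qofC (u : nat -> R) : qt2 (qlin u q n) = 0.
Proof. by rewrite qt2_qlin big1 // => i _; rewrite qt2_qofC mulr0. Qed.

Lemma qeval_qofC (z : R[i]) : qeval q n (qofC z) = qofC (P z).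
Proof.
apply: qt12_ext; rewrite qeval_sphere qnorm2_qofC.
  have := sum_qt1_sphere q n z.
  rewrite (eq_bigr (fun i : 'I_n.+1 => c i * z ^+ i)) => [->|i _]; last by rewrite qt1_qofC.
  by rewrite qt1_add qt1_mul qt2_qofC conjc0 mulr0 subr0 !qt1_qofC.
by rewrite qt2_add qt2_mul /sph_offset /sph_slope !qt2_qlin_qofC qt2_qofC mulr0 mul0r !add0r.
Qed.

Lemma sph_eq0_of_qofC_solution (x : H) : qt2 x != 0 -> qeval q n x = qzero R ->
  sph_offset q n (qa x) (qnorm2 x) = qzero R /\ sph_slope q n (qa x) (qnorm2 x) = qzero R.
Proof.
rewrite qeval_sphere; set G := sph_offset _ _ _ _; set D := sph_slope _ _ _ _ => x2 x0.
have G2 : qt2 G = 0 by apply: qt2_qlin_qofC.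
have D2 : qt2 D = 0 by apply: qt2_qlin_qofC.
have D1 : qt1 D = 0.
  move: (congr1 (@qt2 R) x0); rewrite qt2_add qt2_mul G2 D2 mul0r !addr0 add0r => /eqP.
  by rewrite mulf_eq0 (negbTE x2) orbF => /eqP.
have D0 : D = qzero R by apply: qt12_ext.
split=> //; apply: qt12_ext => //.
by move: (congr1 (@qt1 R) x0); rewrite qt1_add qt1_mul D1 D2 !mul0r subrr addr0.
Qed.

Lemma sph_point_roots (x : H) : qt2 x != 0 -> qeval q n x = qzero R ->
  P (sph_point x) = 0 /\ P (conjc (sph_point x)) = 0.
Proof.
move=> x2 /(sph_eq0_of_qofC_solution x2) [G0 D0].
have root_at w : Re w = qa x -> cnorm2 w = qnorm2 x -> P w = 0.
  by move=> wa wN; apply/dpoly_root_qofC; apply: dpoly_root_of_sph_eq0; rewrite wa wN.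
by split; apply: root_at; rewrite ?Re_conj ?cnorm2_conj ?cnorm2_sph_point.
Qed.

Lemma qeval_qclass_eq0 (z : R[i]) (x : H) : Im z != 0 -> P z = 0 -> P (conjc z) = 0 ->
  qclass (qofC z) x -> qeval q n x = qzero R.
Proof.
move=> z0 /dpoly_root_qofC Pz /dpoly_root_qofC Pzc /qclass_qofC [xa xim].
have [G0 D0] := sph_eq0_of_dpoly_roots z0 Pz Pzc.
by apply: (qeval_eq0_of_sph_eq0 G0 D0) => //; rewrite qnorm2E xa xim.
Qed.

Lemma complex_coef_solutions (xs : seq R) (es zs : seq R[i]) :
  all (fun z => Im z != 0) (es ++ zs) ->
  (forall e, e \in es -> P (conjc e) != 0) ->
  (forall z : R[i], P z = 0 <->
     (z \in [seq r%:C | r <- xs] \/ z \in es \/ z \in zs \/ conjc z \in zs)) ->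
  forall x : H, qeval q n x = qzero R <->
    ((exists2 r, r \in xs & x = qofR r) \/ (exists2 e, e \in es & x = qofC e) \/
     (exists2 z, z \in zs & qclass (qofC z) x)).
Proof.
move=> nonreal conj_es roots x; split => [x0 | ]; last first.
  case=> [[r xr ->] | [[e ee ->] | [z zz xz]]].
  - rewrite -[qofR r]/(qofC r%:C) qeval_qofC (proj2 (roots _)) //.
    by left; apply: map_f.
  - by rewrite qeval_qofC (proj2 (roots e)) //; right; left.
  - apply: (qeval_qclass_eq0 _ _ _ xz).
    + by apply: (allP nonreal); rewrite mem_cat zz orbT.
    + by apply/roots; right; right; left.
    + by apply/roots; right; right; right; rewrite conjcK.
have [/qofC_qt1 xz | x2] := eqVneq (qt2 x) 0.
  move: x0; rewrite xz; move: (qt1 x) => z.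
  rewrite qeval_qofC => /(congr1 (@qt1 R)); rewrite !qt1_qofC => /roots.
  case=> [/mapP [r xr ->] | [ze | [zz | zz]]]; first by left; exists r.
  - by right; left; exists z.
  - by right; right; exists z => //; apply/qclass_qofC; rewrite /qim2 /=; split=> //; ring.
  - right; right; exists (conjc z) => //; apply/qclass_conj.
    by apply/qclass_qofC; rewrite /qim2 /=; split=> //; ring.
have [Pw Pwc] := sph_point_roots x2 x0.
have w0 : Im (sph_point x) != 0.
  by apply: contra x2 => /eqP/Im_sph_point_eq0 ->.
case/roots: Pw => [/mapP [r _ rE] | [we | [wz | wz]]].
- by rewrite rE eqxx in w0.
- by move: (conj_es _ we); rewrite Pwc eqxx.
- by right; right; exists (sph_point x) => //; apply: qclass_sph_point.
- right; right; exists (conjc (sph_point x)) => //.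
  by apply/qclass_conj; apply: qclass_sph_point.
Qed.

End ComplexCoefficients.

Lemma real_coef_solutions (n : nat) (q : nat -> R) (xs : seq R) (zs : seq R[i]) :
  all (fun z => Im z != 0) zs ->
  (forall z : R[i], \sum_(i < n.+1) (q i)%:C * z ^+ i = 0 <->
     (z \in [seq r%:C | r <- xs] \/ z \in zs \/ conjc z \in zs)) ->
  forall x : H, qeval (fun i => qofR (q i)) n x = qzero R <->
    ((exists2 r, r \in xs & x = qofR r) \/ (exists2 z, z \in zs & qclass (qofC z) x)).
Proof.
move=> nonreal roots x.
rewrite -[qeval _ n x]/(qeval (fun i => qofC (q i)%:C) n x).
rewrite (@complex_coef_solutions (fun i => (q i)%:C) n xs [::] zs) //.
  by split=> [[xr | [[] // | xz]] | [xr | xz]]; [left | right | left | right; right].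
by move=> z; rewrite roots in_nil; intuition.
Qed.

Lemma sphere_infinite (a s : R) (L : seq H) : s != 0 ->
  ~ (forall x, qa x = a -> qim2 x = s ^+ 2 -> x \in L).
Proof.
move=> s0 covers.
have pos (t : nat) : 1 + t%:R ^+ 2 != 0 :> R by rewrite paddr_eq0 ?ler01 ?sqr_ge0 ?oner_eq0.
(* rational parametrisation of the circle of radius s *)
pose xt (t : nat) := Quat a (s * (2 / (1 + t%:R ^+ 2) - 1)) (s * (2 * t%:R / (1 + t%:R ^+ 2))) 0.
have two0 : 2 != 0 :> R by rewrite pnatr_eq0.
have xt_inj : injective xt.
  move=> t1 t2 /(congr1 (@qb R)) /= /(mulfI s0) /addIr /(mulfI two0) /invr_inj /addrI.
  by rewrite -!natrX => /eqP; rewrite eqr_nat eqn_exp2r // => /eqP.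
have := @uniq_leq_size _ [seq xt t | t <- iota 0 (size L).+1] L.
rewrite map_inj_uniq // iota_uniq size_map size_iota ltnn => /(_ isT) small.
suff: false by []; apply: small.
move=> _ /mapP [t _ ->]; apply: covers => //.
by have := pos t; rewrite /qim2 /= => pt; field.
Qed.

Lemma nonreal_dpoly_root_infinite (q : nat -> H) n (w : R[i]) (L : seq H) :
  Im w != 0 -> dpoly_root q n w -> dpoly_root q n (conjc w) ->
  ~ (forall x, qeval q n x = qzero R -> x \in L).
Proof.
move=> w0 rw rwc covers; have [G0 D0] := sph_eq0_of_dpoly_roots w0 rw rwc.
apply: (@sphere_infinite (Re w) (Im w) L w0) => x xa xim; apply: covers.
by apply: (qeval_eq0_of_sph_eq0 G0 D0) => //; rewrite qnorm2E xa xim.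
Qed.

Definition qopp (x : H) : H := Quat (- qa x) (- qb x) (- qc x) (- qd x).

Lemma qadd_eq0 (x y : H) : qadd x y = qzero R -> x = qopp y.
Proof.
case: x y => x1 x2 x3 x4 [y1 y2 y3 y4] [] /eqP + /eqP + /eqP + /eqP.
by rewrite !addr_eq0 => /eqP-> /eqP-> /eqP-> /eqP->.
Qed.

Lemma qaffine_solve (G D x : H) : D <> qzero R -> qadd G (qmul D x) = qzero R ->
  x = qopp (qmul (qinv D) G).
Proof.
move=> /qnorm2_neq0 D0 /qadd_eq0 ->; move: D0.
case: D x => d1 d2 d3 d4 [x1 x2 x3 x4]; rewrite /qnorm2 /= => D0.
by apply: quat_ext; rewrite /qinv /qnorm2 /=; field.
Qed.

(* Substituting [G = - D x], the left-hand side becomes [(qnorm2 D) (qim2 x - Im w ^ 2)]. *)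
Lemma qaffine_root_norm (G D x : H) (w : R[i]) :
  Re w = qa x -> Im w ^+ 2 = qim2 x -> qadd G (qmul D x) = qzero R ->
  (qt1 G + qt1 D * w) * conjc (qt1 G + qt1 D * conjc w) +
  (qt2 G + qt2 D * w) * conjc (qt2 G + qt2 D * conjc w) = 0.
Proof.
move=> wa wim /qadd_eq0 ->; move: wa wim.
case: w D x => a s [d1 d2 d3 d4] [x1 x2 x3 x4]; rewrite /qim2 /= => -> wim.
rewrite /qt1 /qt2 /=; simpc; congr (_ +i* _); last by ring.
transitivity ((d1 ^+ 2 + d2 ^+ 2 + d3 ^+ 2 + d4 ^+ 2) * (x2 ^+ 2 + x3 ^+ 2 + x4 ^+ 2 - s ^+ 2)).
  by ring.
by rewrite wim subrr mulr0.
Qed.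

Lemma coefM_size (P Q : {poly R[i]}) m n : (size P <= m.+1)%N -> (size Q <= n.+1)%N ->
  (P * Q)`_(m + n) = P`_m * Q`_n.
Proof.
move=> sP sQ; have mn : (m < (m + n).+1)%N by rewrite ltnS leq_addr.
rewrite coefM (bigD1 (Ordinal mn)) //= addKn big1 ?addr0 // => j /eqP /= jm.
have [j_lt_m | m_lt_j] := ltnP j m.
  by rewrite [Q`__]nth_default ?mulr0 // (leq_trans sQ) // ltn_subRL ltn_add2r.
by rewrite nth_default ?mul0r // (leq_trans sP) // ltn_neqAle eq_sym m_lt_j andbT; apply/eqP => mj; apply: jm; by apply: val_inj; rewrite /= mj.
Qed.

Definition qcoef (p : nat -> H) (d0 : R) (i : nat) : H := if i == 0%N then qofR d0 else p i.

Section DerivedPolynomials.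
Variables (p : nat -> H) (n : nat) (d0 : R).
Local Notation q := (qcoef p d0).

Lemma horner_derf1 (w : R[i]) : (derf1 p n d0).[w] = \sum_(i < n.+1) qt1 (q i) * w ^+ i.
Proof. by rewrite horner_poly; apply: eq_bigr => i _; rewrite /qcoef; case: (_ == _). Qed.

Lemma horner_derf2 (w : R[i]) : (derf2 p n).[w] = \sum_(i < n.+1) qt2 (q i) * w ^+ i.
Proof. by rewrite horner_poly; apply: eq_bigr => i _; rewrite /qcoef; case: (_ == _). Qed.

Lemma horner_derf1bar (w : R[i]) : (derf1bar p n d0).[w] = conjc (derf1 p n d0).[conjc w].
Proof.
rewrite !horner_poly rmorph_sum; apply: eq_bigr => i _.
by rewrite rmorphM rmorphXn /= conjcK; case: (_ == _); rewrite ?conjc_real.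
Qed.

Lemma horner_derf2bar (w : R[i]) : (derf2bar p n).[w] = conjc (derf2 p n).[conjc w].
Proof.
rewrite !horner_poly rmorph_sum; apply: eq_bigr => i _.
by rewrite rmorphM rmorphXn /= conjcK; case: (_ == _); rewrite ?conjc0 ?mul0r.
Qed.

Lemma root_gcd_derf12 (w : R[i]) : root (gcdp (derf1 p n d0) (derf2 p n)) w <-> dpoly_root q n w.
Proof.
rewrite root_gcd /root /dpoly_root horner_derf1 horner_derf2.
by split=> [/andP[/eqP-> /eqP->] | [-> ->]]; rewrite ?eqxx.
Qed.

Lemma root_gcd_derf (w : R[i]) :
  root (gcdp (gcdp (derf1 p n d0) (derf2 p n)) (gcdp (derf1bar p n d0) (derf2bar p n))) w <->
  dpoly_root q n w /\ dpoly_root q n (conjc w).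
Proof.
have bar : root (gcdp (derf1bar p n d0) (derf2bar p n)) w =
           root (gcdp (derf1 p n d0) (derf2 p n)) (conjc w).
  by rewrite !root_gcd /root horner_derf1bar horner_derf2bar !conjc_eq0.
rewrite root_gcd bar; split=> [/andP[/root_gcd_derf12 r /root_gcd_derf12 rc] //|].
by case=> /root_gcd_derf12 -> /root_gcd_derf12 ->.
Qed.

Definition derF : {poly R[i]} := derf1 p n d0 * derf1bar p n d0 + derf2 p n * derf2bar p n.

Lemma derF_coef : (0 < n)%N -> derF`_(n + n) = (qnorm2 (p n))%:C.
Proof.
move=> n0; rewrite coefD !coefM_size ?size_poly // !coef_poly ltnSn eqn0Ngt n0 /=.
by case: (p n) => a b c d; rewrite /qnorm2 /=; simpc; congr (_ +i* _); rewrite /=; ring.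
Qed.

Lemma derF_neq0 : (0 < n)%N -> p n <> qzero R -> derF != 0.
Proof.
move=> n0 /qnorm2_neq0 pn; apply/eqP => F0.
by have := derF_coef n0; rewrite F0 coef0 => -[N0]; rewrite -N0 eqxx in pn.
Qed.

Lemma derF_root (x : H) : qeval q n x = qzero R -> root derF (sph_point x).
Proof.
rewrite qeval_sphere => x0.
rewrite /root /derF hornerD !hornerM horner_derf1bar horner_derf2bar !horner_derf1 !horner_derf2.
rewrite !sum_qt1_sphere !sum_qt2_sphere Re_conj cnorm2_conj cnorm2_sph_point.
by rewrite (@qaffine_root_norm _ _ x (sph_point x) erefl (sqr_Im_sph_point x) x0).
Qed.

Definition sph_solve (w : R[i]) : H :=
  qopp (qmul (qinv (sph_slope q n (Re w) (cnorm2 w))) (sph_offset q n (Re w) (cnorm2 w))).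

Lemma finite_solutions : derF != 0 ->
  (forall w, dpoly_root q n w -> dpoly_root q n (conjc w) -> Im w = 0) ->
  exists s : seq H, forall x, qeval q n x = qzero R -> x \in s.
Proof.
move=> F0 real_roots; have [rs Fr] := closed_field_poly_normal derF.
have rootF w : root derF w -> w \in rs by rewrite Fr rootZ ?lead_coef_eq0 // root_prod_XsubC.
exists ([seq qofR (Re w) | w <- rs] ++ [seq sph_solve w | w <- rs]) => x x0.
have ws := rootF _ (derF_root x0); rewrite qeval_sphere in x0.
rewrite mem_cat; apply/orP.
have [D0 | D0] := eqVneq (sph_slope q n (qa x) (qnorm2 x)) (qzero R); [left | right].
  have G0 : sph_offset q n (qa x) (qnorm2 x) = qzero R.
    by rewrite -x0 D0; apply: quat_ext => /=; ring.
  apply/mapP; exists (sph_point x) => //; apply: Im_sph_point_eq0.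
  by apply: real_roots; apply: dpoly_root_of_sph_eq0; rewrite ?Re_conj ?cnorm2_conj ?cnorm2_sph_point.
apply/mapP; exists (sph_point x) => //.
by rewrite /sph_solve cnorm2_sph_point; apply: qaffine_solve => //; apply/eqP.
Qed.

End DerivedPolynomials.

End Quaternions.

Theorem corollary3 (R : realType) :
  (* (a) real coefficients *)
  (forall (n : nat) (q : nat -> R), q n != 0 ->
   forall (xs : seq R) (zs : seq R[i]),
     uniq xs -> uniq zs -> all (fun z => complex.Im z != 0) zs ->
     (forall z : R[i],
        \sum_(i < n.+1) (q i)%:C%C * z ^+ i = 0 <->
        (z \in [seq r%:C%C | r <- xs] \/ z \in zs \/ conjc z \in zs)) ->
     forall x : quat R,
       qeval (fun i => qofR (q i)) n x = qzero R <->
       ((exists2 r, r \in xs & x = qofR r) \/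
        (exists2 z, z \in zs & qclass (qofC z) x)))
  /\
  (* (b) complex coefficients *)
  (forall (n : nat) (c : nat -> R[i]), c n != 0 ->
   forall (xs : seq R) (es zs : seq R[i]),
     uniq xs -> uniq (es ++ zs) -> all (fun z => complex.Im z != 0) (es ++ zs) ->
     (forall e, e \in es -> \sum_(i < n.+1) c i * (conjc e) ^+ i != 0) ->
     (forall z : R[i],
        \sum_(i < n.+1) c i * z ^+ i = 0 <->
        (z \in [seq r%:C | r <- xs] \/ z \in es \/ z \in zs \/ conjc z \in zs)) ->
     forall x : quat R,
       qeval (fun i => qofC (c i)) n x = qzero R <->
       ((exists2 r, r \in xs & x = qofR r) \/
        (exists2 e, e \in es & x = qofC e) \/
        (exists2 z, z \in zs & qclass (qofC z) x)))
  /\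
  (* (c) finiteness criterion *)
  (forall (n : nat) (p : nat -> quat R) (d0 : R),
     (1 <= n)%N -> p n <> qzero R -> (d0 = 0 \/ d0 = 1) ->
     let eqn := qeval (fun i => if i == 0%N then qofR d0 else p i) n in
     let g := gcdp (gcdp (derf1 p n d0) (derf2 p n))
                   (gcdp (derf1bar p n d0) (derf2bar p n)) in
     let g12 := gcdp (derf1 p n d0) (derf2 p n) in
     ((exists s : seq (quat R), forall x, eqn x = qzero R -> x \in s) <->
      (forall c : R[i], root g c -> complex.Im c = 0))
     /\
     ((forall c : R[i], root g c -> complex.Im c = 0) <->
      ~ (exists c : R[i], complex.Im c != 0 /\ root g12 c /\ root g12 (conjc c)))).
Proof.
split; first by move=> n q _ xs zs _ _; apply: real_coef_solutions.
split; first by move=> n c _ xs es zs _ _; apply: complex_coef_solutions.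
move=> n p d0 n0 pn _ /=; have gE := root_gcd_derf p n d0.
split; split.
- case=> L covers w /gE [rw rwc]; have [//|w0] := eqVneq (complex.Im w) 0.
  by case: (nonreal_dpoly_root_infinite w0 rw rwc covers).
- move=> real_roots; apply: finite_solutions; first exact: derF_neq0.
  by move=> w rw rwc; apply: real_roots; apply/gE.
- move=> real_roots [w [w0 [/root_gcd_derf12 rw /root_gcd_derf12 rwc]]].
  by move: w0; rewrite real_roots ?eqxx //; apply/gE.
- move=> no_pair w /gE [rw rwc]; have [//|w0] := eqVneq (complex.Im w) 0.
  by case: no_pair; exists w; split=> //; split; apply/root_gcd_derf12.
Qed.
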